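(* Suppose $0\le\alpha_3\le\alpha_2\le\alpha_1\le\pi/4$ and $0\le\alpha_3'\le\alpha_2'\le\alpha_1'\le\pi/4$. Then the two-qubit unitaries $U(\alpha_1,\alpha_2,\alpha_3)$ and $U(\alpha_1',\alpha_2',\alpha_3')$ have the same Schmidt coefficients if and only if either (a) $\alpha_1=\alpha_1'$, $\alpha_2=\alpha_2'$, $\alpha_3=\alpha_3'$; or (b) $\alpha_1=\alpha_1'=\pi/4$ and $\cos(2\alpha_2)\cos(2\alpha_3)=\cos(2\alpha_2')\cos(2\alpha_3')$.
   Context: $U(\alpha_1,\alpha_2,\alpha_3)=\exp[-\mathrm{i}\sum_{k=1}^3\alpha_k\sigma_k\otimes\sigma_k]$ with $\sigma_k$ the Pauli matrices. The Schmidt coefficients of a two-qubit unitary $V$ are the Schmidt coefficients of $(V\otimes I_{A'B'})|\Phi\rangle_{AA'}|\Phi\rangle_{BB'}$, $|\Phi\rangle=(|00\rangle+|11\rangle)/\sqrt2$, with respect to the bipartition $AA'|BB'$. For $U(\alpha_1,\alpha_2,\alpha_3)$ these are $|\zeta_0|,\dots,|\zeta_3|$ with $\zeta_0=\cos\alpha_1\cos\alpha_2\cos\alpha_3-\mathrm{i}\sin\alpha_1\sin\alpha_2\sin\alpha_3$, $\zeta_1=\cos\alpha_1\sin\alpha_2\sin\alpha_3-\mathrm{i}\sin\alpha_1\cos\alpha_2\cos\alpha_3$, $\zeta_2=\sin\alpha_1\cos\alpha_2\sin\alpha_3-\mathrm{i}\cos\alpha_1\sin\alpha_2\cos\alpha_3$,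 $\zeta_3=\sin\alpha_1\sin\alpha_2\cos\alpha_3-\mathrm{i}\cos\alpha_1\cos\alpha_2\sin\alpha_3$. ''Same Schmidt coefficients'' means the same multiset of Schmidt coefficients. *)

From Stdlib Require Import Reals List Permutation.
From Coquelicot Require Import Coquelicot.
Open Scope R_scope.

(* The complex numbers zeta_0..zeta_3 attached to U(a1,a2,a3)
   (as given in the paper's context): zeta = re - i * im. *)
Definition zeta0 (a1 a2 a3 : R) : C :=
  (cos a1 * cos a2 * cos a3, - (sin a1 * sin a2 * sin a3)).
Definition zeta1 (a1 a2 a3 : R) : C :=
  (cos a1 * sin a2 * sin a3, - (sin a1 * cos a2 * cos a3)).
Definition zeta2 (a1 a2 a3 : R) : C :=
  (sin a1 * cos a2 * sin a3, - (cos a1 * sin a2 * cos a3)).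
Definition zeta3 (a1 a2 a3 : R) : C :=
  (sin a1 * sin a2 * cos a3, - (cos a1 * cos a2 * sin a3)).

Definition schmidt_coeffs (a1 a2 a3 : R) : list R :=
  Cmod (zeta0 a1 a2 a3) :: Cmod (zeta1 a1 a2 a3) ::
  Cmod (zeta2 a1 a2 a3) :: Cmod (zeta3 a1 a2 a3) :: nil.

Definition same_schmidt (a1 a2 a3 b1 b2 b3 : R) : Prop :=
  Permutation (schmidt_coeffs a1 a2 a3) (schmidt_coeffs b1 b2 b3).

From Stdlib Require Import Reals List Permutation Sorting Lra.
From Coquelicot Require Import Coquelicot.
Open Scope R_scope.

(* Write x_k = cos (2 a_k).  Each |zeta_j|^2 equals (1 + y1 y2 + y1 y3 + y2 y3) / 4
   where y = (x1, x2, x3) with the signs of an even number of entries flipped.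
   For ordered angles 0 <= x1 <= x2 <= x3 <= 1, and then these four numbers come out
   in decreasing order, so two multisets of Schmidt coefficients agree iff the
   lists agree, i.e. iff the pairwise products x_i x_j agree.  The pairwise
   products of a nonnegative triple determine it, unless x1 = 0 (a1 = PI/4),
   in which case they only determine x2 x3. *)

Section SortedPermutation.

Variables (A : Type) (le : A -> A -> Prop).
Hypothesis le_antisym : forall a b, le a b -> le b a -> a = b.

Lemma Permutation_StronglySorted_eq (l l' : list A) :
  Permutation l l' -> StronglySorted le l -> StronglySorted le l' -> l = l'.
Proof.
  revert l'; induction l as [|a l IH]; intros l' HP Hl Hl'.
  - symmetry; now apply Permutation_nil.
  - destruct l' as [|b l'].
    + now apply Permutation_sym, Permutation_nil in HP.
    + apply StronglySorted_inv in Hl as [Hl Hal].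
      apply StronglySorted_inv in Hl' as [Hl' Hbl'].
      rewrite Forall_forall in Hal, Hbl'.
      assert (Hab : a = b).
      { destruct (Permutation_in a HP (in_eq a l)) as [|Ha]; [easy|].
        destruct (Permutation_in b (Permutation_sym HP) (in_eq b l')) as [|Hb];
          [easy|].
        now apply le_antisym; [apply Hal | apply Hbl']. }
      subst b; f_equal.
      now apply IH; [apply Permutation_cons_inv with a|..].
Qed.

End SortedPermutation.

Lemma Permutation_map_sqrt_inv (l l' : list R) :
  List.Forall (Rle 0) l -> List.Forall (Rle 0) l' ->
  Permutation (map sqrt l) (map sqrt l') -> Permutation l l'.
Proof.
  intros Hl Hl' HP.
  assert (Hsq : forall k, List.Forall (Rle 0) k -> map (fun r => r ^ 2) (map sqrt k) = k).
  { induction 1 as [|r k Hr _ IH]; [easy|]. cbn [map]; now rewrite pow2_sqrt, IH. }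
  rewrite <- (Hsq l Hl), <- (Hsq l' Hl').
  now apply Permutation_map.
Qed.

Definition schmidt_weight (y1 y2 y3 : R) : R := (1 + y1 * y2 + y1 * y3 + y2 * y3) / 4.

Definition schmidt_weights (x1 x2 x3 : R) : list R :=
  schmidt_weight x1 x2 x3 :: schmidt_weight x1 (- x2) (- x3) ::
  schmidt_weight (- x1) x2 (- x3) :: schmidt_weight (- x1) (- x2) x3 :: nil.

Lemma Cmod_triple_products (u1 u2 u3 v1 v2 v3 y1 y2 y3 : R) :
  u1 ^ 2 + v1 ^ 2 = 1 -> u2 ^ 2 + v2 ^ 2 = 1 -> u3 ^ 2 + v3 ^ 2 = 1 ->
  y1 = u1 ^ 2 - v1 ^ 2 -> y2 = u2 ^ 2 - v2 ^ 2 -> y3 = u3 ^ 2 - v3 ^ 2 ->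
  Cmod (u1 * u2 * u3, - (v1 * v2 * v3)) = sqrt (schmidt_weight y1 y2 y3).
Proof.
  intros H1 H2 H3 -> -> ->; unfold Cmod, schmidt_weight; simpl fst; simpl snd.
  f_equal.
  replace ((u1 * u2 * u3) ^ 2 + (- (v1 * v2 * v3)) ^ 2)
    with (u1 ^ 2 * u2 ^ 2 * u3 ^ 2 + v1 ^ 2 * v2 ^ 2 * v3 ^ 2) by ring.
  replace (v1 ^ 2) with (1 - u1 ^ 2) by lra.
  replace (v2 ^ 2) with (1 - u2 ^ 2) by lra.
  replace (v3 ^ 2) with (1 - u3 ^ 2) by lra.
  field.
Qed.

Lemma schmidt_coeffs_weights (a1 a2 a3 : R) :
  schmidt_coeffs a1 a2 a3 =
  map sqrt (schmidt_weights (cos (2 * a1)) (cos (2 * a2)) (cos (2 * a3))).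
Proof.
  assert (Htrig : forall a, cos a ^ 2 + sin a ^ 2 = 1 /\
                            cos (2 * a) = cos a ^ 2 - sin a ^ 2).
  { intro a; pose proof (sin2_cos2 a); rewrite cos_2a; unfold Rsqr in *.
    split; lra. }
  destruct (Htrig a1), (Htrig a2), (Htrig a3).
  unfold schmidt_coeffs, zeta0, zeta1, zeta2, zeta3; simpl map.
  repeat f_equal; apply Cmod_triple_products; lra.
Qed.

Lemma schmidt_weight_nonneg (y1 y2 y3 : R) :
  -1 <= y1 <= 1 -> -1 <= y2 <= 1 -> -1 <= y3 <= 1 -> 0 <= schmidt_weight y1 y2 y3.
Proof.
  intros. unfold schmidt_weight.
  (* 8 w = (1+y1)(1+y2)(1+y3) + (1-y1)(1-y2)(1-y3) *)
  assert (0 <= (1 + y1) * (1 + y2) * (1 + y3)) by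
    (repeat apply Rmult_le_pos; lra).
  assert (0 <= (1 - y1) * (1 - y2) * (1 - y3)) by
    (repeat apply Rmult_le_pos; lra).
  lra.
Qed.

Lemma schmidt_weights_nonneg (x1 x2 x3 : R) :
  -1 <= x1 <= 1 -> -1 <= x2 <= 1 -> -1 <= x3 <= 1 ->
  List.Forall (Rle 0) (schmidt_weights x1 x2 x3).
Proof.
  intros.
  repeat (apply List.Forall_cons; [apply schmidt_weight_nonneg; lra|]).
  apply List.Forall_nil.
Qed.

Lemma schmidt_weights_sorted (x1 x2 x3 : R) :
  0 <= x1 -> x1 <= x2 -> x2 <= x3 ->
  StronglySorted Rge (schmidt_weights x1 x2 x3).
Proof.
  intros.
  (* twice the consecutive differences of the weights *)
  assert (0 <= x1 * (x2 + x3)) by (apply Rmult_le_pos; lra).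
  assert (0 <= x3 * (x2 - x1)) by (apply Rmult_le_pos; lra).
  assert (0 <= x1 * (x3 - x2)) by (apply Rmult_le_pos; lra).
  unfold schmidt_weights, schmidt_weight.
  repeat first [apply SSorted_nil | apply SSorted_cons | apply List.Forall_nil | apply List.Forall_cons].
  all: lra.
Qed.

Lemma schmidt_weights_eq_iff (x1 x2 x3 y1 y2 y3 : R) :
  schmidt_weights x1 x2 x3 = schmidt_weights y1 y2 y3 <->
  x1 * x2 = y1 * y2 /\ x1 * x3 = y1 * y3 /\ x2 * x3 = y2 * y3.
Proof.
  unfold schmidt_weights, schmidt_weight; split.
  - intro E; injection E; intros; repeat split; lra.
  - intros (E12 & E13 & E23); do 4 (apply f_equal2; [lra|]); reflexivity.
Qed.

Lemma pos_triple_eq_of_products (x1 x2 x3 y1 y2 y3 : R) :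
  0 < x1 -> 0 < x2 -> 0 < x3 -> 0 < y1 ->
  x1 * x2 = y1 * y2 -> x1 * x3 = y1 * y3 -> x2 * x3 = y2 * y3 ->
  x1 = y1 /\ x2 = y2 /\ x3 = y3.
Proof.
  intros Hx1 Hx2 Hx3 Hy1 E12 E13 E23.
  assert (Hsq : x1 ^ 2 = y1 ^ 2).
  { apply Rmult_eq_reg_r with (x2 * x3); [|nra].
    transitivity ((x1 * x2) * (x1 * x3)); [ring|].
    rewrite E12, E13, E23; ring. }
  assert (x1 = y1) by nra; subst y1.
  split; [|split]; [easy|..]; apply Rmult_eq_reg_l with x1; lra.
Qed.

Lemma sorted_triple_products_eq_iff (x1 x2 x3 y1 y2 y3 : R) :
  0 <= x1 -> x1 <= x2 -> x2 <= x3 -> 0 <= y1 -> y1 <= y2 -> y2 <= y3 ->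
  (x1 * x2 = y1 * y2 /\ x1 * x3 = y1 * y3 /\ x2 * x3 = y2 * y3) <->
  (x1 = y1 /\ x2 = y2 /\ x3 = y3) \/ (x1 = 0 /\ y1 = 0 /\ x2 * x3 = y2 * y3).
Proof.
  intros; split.
  - intros (E12 & E13 & E23).
    destruct (Req_dec x1 0) as [Hx1|Hx1]; [subst x1|].
    + right; repeat split; [|easy].
      destruct (Rmult_integral y1 y2); lra.
    + left.
      assert (y1 <> 0) by (intros ->; destruct (Rmult_integral x1 x2); lra).
      apply pos_triple_eq_of_products; lra.
  - intros [(-> & -> & ->) | (-> & -> & E23)]; repeat split; lra.
Qed.

Lemma cos_double_ordered (a1 a2 a3 : R) :
  0 <= a3 -> a3 <= a2 -> a2 <= a1 -> a1 <= PI / 4 ->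
  0 <= cos (2 * a1) /\ cos (2 * a1) <= cos (2 * a2) /\
  cos (2 * a2) <= cos (2 * a3) /\ cos (2 * a3) <= 1.
Proof.
  intros; pose proof PI_RGT_0.
  repeat split; [apply cos_ge_0 | apply cos_decr_1 .. | apply COS_bound]; lra.
Qed.

Lemma cos_double_inj_iff (a b : R) :
  0 <= a <= PI / 2 -> 0 <= b <= PI / 2 -> cos (2 * a) = cos (2 * b) <-> a = b.
Proof.
  split; [|now intros ->].
  intro E; apply cos_inj in E; lra.
Qed.

Lemma cos_double_eq_0_iff (a : R) :
  0 <= a <= PI / 2 -> cos (2 * a) = 0 <-> a = PI / 4.
Proof.
  intro; pose proof PI_RGT_0.
  rewrite <- cos_PI2.
  replace (PI / 2) with (2 * (PI / 4)) at 1 by field.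
  apply cos_double_inj_iff; lra.
Qed.

Lemma same_schmidt_iff_weights (a1 a2 a3 b1 b2 b3 : R) :
  0 <= a3 -> a3 <= a2 -> a2 <= a1 -> a1 <= PI / 4 ->
  0 <= b3 -> b3 <= b2 -> b2 <= b1 -> b1 <= PI / 4 ->
  same_schmidt a1 a2 a3 b1 b2 b3 <->
  schmidt_weights (cos (2 * a1)) (cos (2 * a2)) (cos (2 * a3)) =
  schmidt_weights (cos (2 * b1)) (cos (2 * b2)) (cos (2 * b3)).
Proof.
  intros.
  destruct (cos_double_ordered a1 a2 a3) as (? & ? & ? & ?); auto.
  destruct (cos_double_ordered b1 b2 b3) as (? & ? & ? & ?); auto.
  unfold same_schmidt; rewrite !schmidt_coeffs_weights; split.
  - intro HP; apply Permutation_StronglySorted_eq with Rge;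
      auto using Rge_antisym, schmidt_weights_sorted.
    apply Permutation_map_sqrt_inv; auto; apply schmidt_weights_nonneg; lra.
  - now intros ->.
Qed.

Theorem lemma10 (a1 a2 a3 b1 b2 b3 : R) :
  0 <= a3 -> a3 <= a2 -> a2 <= a1 -> a1 <= PI / 4 ->
  0 <= b3 -> b3 <= b2 -> b2 <= b1 -> b1 <= PI / 4 ->
  (same_schmidt a1 a2 a3 b1 b2 b3 <->
   ((a1 = b1 /\ a2 = b2 /\ a3 = b3) \/
    (a1 = PI / 4 /\ b1 = PI / 4 /\
     cos (2 * a2) * cos (2 * a3) = cos (2 * b2) * cos (2 * b3)))).
Proof.
  intros; pose proof PI_RGT_0.
  destruct (cos_double_ordered a1 a2 a3) as (? & ? & ? & ?); auto.
  destruct (cos_double_ordered b1 b2 b3) as (? & ? & ? & ?); auto.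
  rewrite same_schmidt_iff_weights, schmidt_weights_eq_iff,
    sorted_triple_products_eq_iff by auto.
  rewrite !cos_double_inj_iff, !cos_double_eq_0_iff by lra.
  reflexivity.
Qed.
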